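(* Let $\mathcal P=(P_1,\dots,P_k)$ be a hinge in $V=\mathbb C^n$ and fix $m\in\{0,1,\dots,n\}$. Consider the operators $\lambda^m(P_1),\dots,\lambda^m(P_k):\Lambda^mV\to\Lambda^mV$. Then exactly one of the following holds: (1) there is a unique $j$ with $\lambda^m(P_j)\neq0$; (2) there is $j$ such that $\lambda^m(P_j)\neq0$, $\lambda^m(P_{j+1})\ne0$ and $\lambda^m(P_t)=0$ for all $t\ne j,j+1$; in this case $\lambda^m(P_j)$ and $\lambda^m(P_{j+1})$ have rank $1$, coincide up to a nonzero factor, and also coincide (up to a nonzero factor) with $\lambda^m(Q_j)$, where $Q_j=\mathrm{Ker}\,P_j\oplus\mathrm{Im}\,P_j$.
   Context: A linear relation is a subspace $P\subset V\oplus V$. $\mathrm{Ker}\,P=\{v: v\oplus0\in P\}$, $\mathrm{Dom}\,P$ and $\mathrm{Im}\,P$ are the projections of $P$ to the first and second summands, $\mathrm{Indef}\,P=\{w:0\oplus w\in P\}$, $\mathrm{rk}\,P=\dim\mathrm{Dom}\,P-\dim\mathrm{Ker}\,P$. If $\dim P=n$, there exist bases $f_1,\dots,f_a,g_1,\dots,g_b,h_1,\dots,h_c$ and $F_1,\dots,F_a,G_1,\dots,G_b,H_1,\dots,H_c$ of $V$ such that $P$ is spanned by $0\oplus F_i$, $g_j\oplus G_j$, $h_k\oplus0$; $\lambda(P):\Lambda V\to\Lambda V$ sends $f_1\wedge\dots\wedge f_a\wedge g_{i_1}\wedge\dots\wedge g_{i_s}$ ($i_1<\dots<i_s$) to $F_1\wedge\dots\wedge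 F_a\wedge G_{i_1}\wedge\dots\wedge G_{i_s}$ and annihilates the other wedge monomials in the basis $f,g,h$; it is defined up to a nonzero scalar, and $\lambda^m(P)$ is its restriction to $\Lambda^mV$. A hinge is a sequence $(P_1,\dots,P_k)$ of $n$-dimensional linear relations such that $\mathrm{Ker}\,P_j=\mathrm{Dom}\,P_{j+1}$ and $\mathrm{Im}\,P_j=\mathrm{Indef}\,P_{j+1}$ for $1\le j\le k-1$, $\mathrm{Dom}\,P_1=V$, $\mathrm{Im}\,P_k=V$, and $\mathrm{rk}\,P_j>0$ for all $j$. *)

From HB Require Import structures.
From mathcomp Require Import all_boot all_order all_algebra.
From mathcomp Require Import reals complex.

Set Implicit Arguments.
Unset Strict Implicit.
Unset Printing Implicit Defensive.

Import GRing.Theory Num.Theory.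
Local Open Scope ring_scope.

(* Conventions: V = F^n is represented by row vectors 'rV[F]_n; V (+) V by
   'rV[F]_(n + n) with v (+) w = row_mx v w.  A linear relation P is given by
   a matrix P : 'M_(n + n) whose row space (mxalgebra, %MS) is the relation. *)

Section LinRel.
Variables (F : fieldType) (n : nat).

Definition DomMx (P : 'M[F]_(n + n)) : 'M[F]_(n + n, n) := lsubmx P.
Definition ImMx (P : 'M[F]_(n + n)) : 'M[F]_(n + n, n) := rsubmx P.
(* Ker P = { v | v (+) 0 \in P } *)
Definition KerMx (P : 'M[F]_(n + n)) : 'M[F]_(n + n, n) :=
  kermx (rsubmx P) *m lsubmx P.
(* Indef P = { w | 0 (+) w \in P } *)
Definition IndefMx (P : 'M[F]_(n + n)) : 'M[F]_(n + n, n) :=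
  kermx (lsubmx P) *m rsubmx P.

Definition rkrel (P : 'M[F]_(n + n)) : nat :=
  (\rank (DomMx P) - \rank (KerMx P))%N.

Definition KerImRel (P : 'M[F]_(n + n)) : 'M[F]_(n + n) :=
  (row_mx (KerMx P) 0 + row_mx 0 (ImMx P))%MS.

Definition hinge (k : nat) (P : nat -> 'M[F]_(n + n)) : Prop :=
  [/\ (0 < k)%N,
      (forall j, (1 <= j <= k)%N -> \rank (P j) = n /\ (0 < rkrel (P j))%N),
      (forall j, (1 <= j)%N -> (j < k)%N ->
          (KerMx (P j) == DomMx (P j.+1))%MS /\
          (ImMx (P j) == IndefMx (P j.+1))%MS),
      row_full (DomMx (P 1%N)) &
      row_full (ImMx (P k))].

(* Exterior power Lambda^m V: basis e_S, S an m-subset of 'I_n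
   (e_S = e_{s_1} /\ ... /\ e_{s_m}, s_1 < ... < s_m). *)
Definition msubsets (m : nat) : {set {set 'I_n}} :=
  [set S : {set 'I_n} | #|S| == m].

Definition extdim (m : nat) : nat := #|msubsets m|.

Definition subs (m : nat) (i : 'I_(extdim m)) : {set 'I_n} := enum_val i.

(* column selection matrix: column r is e_{s_r} where s_r is the r-th
   (0-based, increasing) element of S *)
Definition selmx (m : nat) (S : {set 'I_n}) : 'M[F]_(n, m) :=
  \matrix_(c, r) ((c \in S) && (#|[set c' in S | (c' < c)%N]| == r)%N)%:R.

(* m-th compound matrix: the matrix of Lambda^m of the endomorphism
   x |-> x *m B (row vector convention); its row S is the coordinate vector
   of the wedge of the rows of B indexed by S, in increasing order. *)
Definition compound (m : nat) (B : 'M[F]_n) : 'M[F]_(extdim m) :=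
  \matrix_(i, j) \det ((selmx m (subs i))^T *m B *m selmx m (subs j)).

Inductive lbl := Lf | Lg | Lh.
Definition lbl_eqb (x y : lbl) : bool :=
  match x, y with Lf, Lf | Lg, Lg | Lh, Lh => true | _, _ => false end.

(* Adapted bases: the rows of B are the basis f,g,h of V and the rows of B'
   are the basis F,G,H, with lab r telling to which family row r belongs
   (the families are ordered by increasing row index); P is spanned by
   0 (+) F_i, g_j (+) G_j, h_k (+) 0. *)
Definition adapted (P : 'M[F]_(n + n)) (B B' : 'M[F]_n) (lab : 'I_n -> lbl)
  : Prop :=
  [/\ B \in unitmx, B' \in unitmx &
      (P == \matrix_(r < n)
              row_mx (if lbl_eqb (lab r) Lf then 0 else row r B)
                     (if lbl_eqb (lab r) Lh then 0 else row r B'))%MS].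

(* basis monomials on which lambda(P) is nonzero: those containing all f's
   and no h *)
Definition admissible (lab : 'I_n -> lbl) (S : {set 'I_n}) : bool :=
  [forall r, lbl_eqb (lab r) Lf ==> (r \in S)] &&
  [forall r, lbl_eqb (lab r) Lh ==> (r \notin S)].

(* the matrix (in the basis e_S, row vector convention) of lambda^m(P)
   built from the adapted bases: it maps the wedge of rows S of B to the
   wedge of rows S of B' when S is admissible, and to 0 otherwise *)
Definition lambda_mx (m : nat) (B B' : 'M[F]_n) (lab : 'I_n -> lbl)
  : 'M[F]_(extdim m) :=
  invmx (compound m B) *m
  diag_mx (\row_i (admissible lab (subs i))%:R) *m compound m B'.

(* L is (a representative, defined up to nonzero scalar, of) lambda^m(P) *)
Definition is_lambda (m : nat) (P : 'M[F]_(n + n)) (L : 'M[F]_(extdim m))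
  : Prop :=
  exists B B' lab, adapted P B B' lab /\ L = lambda_mx m B B' lab.

Definition proportional (p : nat) (A C : 'M[F]_p) : Prop :=
  exists c : F, c != 0 /\ A = c *: C.

End LinRel.
Arguments is_lambda {F n} m P L.
Arguments lambda_mx {F n} m B B' lab.

(* lambda^m(P) is nonzero iff some m-subset of the adapted basis contains every f
   and no h, i.e. iff a <= m <= a + b with a = dim Indef P = #f, b = rk P and
   a + b = dim Im P = n - #h.  Along a hinge, Ker P_j = Dom P_(j+1) gives
   a_(j+1) = a_j + b_j, while a_1 = 0, a_k + b_k = n and b_j > 0: the intervals
   [a_j, a_j + b_j] tile [0, n] and meet only at endpoints.  So m lies in one
   interval, or in two consecutive ones exactly when m = a_(j+1).  In that case
   P_j, P_(j+1) and Q_j each have a single admissible m-subset, so their lambda^m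
   are rank one; the inclusions Ker P_j <= Dom P_(j+1) and Im P_j <= Indef P_(j+1)
   make the relevant minors of the change-of-basis matrices vanish, and the
   multiplicativity of compound matrices (Cauchy-Binet) shows that the three rank
   one maps are proportional. *)

From HB Require Import structures.
From mathcomp Require Import all_boot all_order all_algebra perm zify.
From mathcomp Require Import reals complex.

Set Implicit Arguments.
Unset Strict Implicit.
Unset Printing Implicit Defensive.

Import GRing.Theory Num.Theory.

Section IntervalChain.

Variables (a b : nat -> nat) (k m : nat).
Hypotheses (k_gt0 : 0 < k) (a1 : a 1 = 0)
  (aS : forall j, 1 <= j < k -> a j.+1 = a j + b j)
  (b_gt0 : forall j, 1 <= j <= k -> 0 < b j)
  (m_le : m <= a k + b k).

Lemma chain_ltn : {in [pred t | 1 <= t <= k] &, {homo a : s t / s < t}}.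
Proof.
apply: homo_ltn_in => [y x z /ltn_trans/[apply] //|s t /andP[s1 _] /andP[_ tk] r|].
  by rewrite !inE; lia.
move=> t /andP[t1 _] /andP[_ tk].
by rewrite aS ?t1 //; have := b_gt0 (j := t); lia.
Qed.

Lemma chain_hit : exists2 j, 1 <= j <= k & forall t, 1 <= t <= k ->
  (a t <= m <= a t + b t) = (t == j) || (t.+1 == j) && (m == a j).
Proof.
pose P t := (1 <= t <= k) && (a t <= m).
have P1 : exists t, P t by exists 1; rewrite /P a1 k_gt0.
have P_le t : P t -> t <= k by case/andP=> /andP[].
case: (ex_maxnP P1 P_le) => j /andP[j_in ajm] maxj.
exists j => // t t_in; apply/idP/idP.
- case/andP=> atm mat; have : t <= j by apply: maxj; rewrite /P t_in atm.
  rewrite leq_eqVlt => /orP[/eqP->|tj]; first by rewrite eqxx.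
  have e : a t.+1 = a t + b t by apply: aS; lia.
  have tj1 : t.+1 = j.
    case: (ltngtP t.+1 j) => // lt; last by lia.
    by have := chain_ltn (x := t.+1) (y := j); rewrite !inE; lia.
  by rewrite tj1 eqxx orbC /=; subst j; apply/eqP; lia.
- case/orP=> [/eqP->|/andP[/eqP tj /eqP->]].
    rewrite ajm /=; case: (ltnP j k) => jk; last by have -> : j = k by lia.
    have e : a j.+1 = a j + b j by apply: aS; lia.
    case: (leqP (a j.+1) m) => [le|]; last by lia.
    have : j.+1 <= j by apply: maxj; rewrite /P le andbT jk.
    by rewrite ltnn.
  subst j; have := chain_ltn (x := t) (y := t.+1); rewrite !inE.
  have := aS (j := t); lia.
Qed.

End IntervalChain.

Local Open Scope ring_scope.

Section SelectionMatrix.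

Variables (F : fieldType) (n : nat).
Implicit Types U : {set 'I_n}.

Lemma colsub1_tr_mul p q (s : 'I_p -> 'I_n) (t : 'I_q -> 'I_n) (A : 'M[F]_n) :
  (colsub s 1%:M)^T *m A *m colsub t 1%:M = mxsub s t A.
Proof.
by rewrite trmx_mxsub trmx1 mul_rowsub_mx mul1mx mulmx_colsub mulmx1 [RHS]mxsubcr.
Qed.

Lemma mxsub1_inj p (s : 'I_p -> 'I_n) : injective s -> mxsub s s 1%:M = 1%:M :> 'M[F]_p.
Proof. by move=> s_inj; apply/matrixP=> i j; rewrite !mxE (inj_eq s_inj). Qed.

Lemma row_free_rowsub1 p (s : 'I_p -> 'I_n) :
  injective s -> row_free (rowsub s 1%:M : 'M[F]_(p, n)).
Proof.
move=> s_inj; apply/row_freeP; exists (colsub s 1%:M).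
by rewrite mul_rowsub_mx mul1mx -mxsubrc mxsub1_inj.
Qed.

Lemma selmx_colsub U m : #|U| = m -> exists s : 'I_m -> 'I_n,
  [/\ injective s, U = [set s r | r in 'I_m] & selmx F m U = colsub s 1%:M].
Proof.
move=> cardU; pose rk (c : 'I_n) := #|[set c' in U | (c' < c)%N]|.
have rk_lt c : c \in U -> (rk c < m)%N.
  move=> cU; rewrite -cardU; apply: proper_card; apply/properP; split.
    by apply/subsetP=> x; rewrite inE => /andP[].
  by exists c => //; rewrite inE ltnn andbF.
have rk_mono (c1 c2 : 'I_n) : c1 \in U -> (c1 < c2)%N -> (rk c1 < rk c2)%N.
  move=> c1U lt; apply: proper_card; apply/properP; split.
    by apply/subsetP=> x; rewrite !inE => /andP[-> /ltn_trans->].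
  by exists c1; rewrite !inE ?c1U ?lt // ltnn andbF.
have rk_inj : {in U &, injective rk}.
  move=> c1 c2 c1U c2U e; apply/val_inj/eqP; case: ltngtP => // lt.
    by have := rk_mono _ _ c1U lt; rewrite e ltnn.
  by have := rk_mono _ _ c2U lt; rewrite e ltnn.
have rk_onto (r : 'I_m) : exists c, (c \in U) && (rk c == r).
  pose h c : 'I_m := insubd r (rk c).
  have hE c : c \in U -> val (h c) = rk c by move=> cU; rewrite val_insubd rk_lt.
  have : r \in h @: U.
    suff -> : h @: U = setT by [].
    apply/eqP; rewrite eqEcard subsetT cardsT card_ord card_in_imset ?cardU ?leqnn //.
    by move=> c1 c2 c1U c2U /(congr1 val); rewrite !hE //; apply: rk_inj.
  by case/imsetP=> c cU ->; exists c; rewrite cU /= hE.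
have [s sP] := fin_all_exists rk_onto.
have sU r : s r \in U by case/andP: (sP r).
have rk_s r : rk (s r) = r by case/andP: (sP r) => _ /eqP.
have selE (c : 'I_n) (r : 'I_m) : (c \in U) && (rk c == r) = (c == s r).
  apply/idP/eqP=> [/andP[cU /eqP rkc]|->]; last exact: sP.
  by apply: rk_inj; rewrite ?sU ?rk_s.
exists s; split.
- by move=> r1 r2 e; apply/val_inj; rewrite /= -(rk_s r1) -(rk_s r2) e.
- apply/setP=> c; apply/idP/imsetP=> [cU|[r _ ->]] //.
  by exists (Ordinal (rk_lt c cU)) => //; apply/eqP; rewrite -selE cU /=.
- by apply/matrixP=> c r; rewrite !mxE -selE.
Qed.

End SelectionMatrix.

Section CauchyBinet.

Variables (F : fieldType) (n m : nat) (M : 'M[F]_(m, n)) (N : 'M[F]_(n, m)).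

Lemma det_mulmx_ffun : \det (M *m N) =
  \sum_(f : {ffun 'I_m -> 'I_n}) (\prod_i M i (f i)) * \det (rowsub f N).
Proof.
rewrite {1}/determinant.
under eq_bigr => t _ do under eq_bigr => i _ do rewrite mxE.
under eq_bigr => t _ do rewrite bigA_distr_bigA mulr_sumr.
rewrite exchange_big /=; apply: eq_bigr => f _.
rewrite /determinant mulr_sumr; apply: eq_bigr => t _.
rewrite big_split /= mulrCA; congr (_ * (_ * _)).
by apply: eq_bigr => i _; rewrite mxE.
Qed.

Lemma det_rowsub_noninj (f : 'I_m -> 'I_n) : ~~ injectiveb f -> \det (rowsub f N) = 0.
Proof.
case/injectivePn=> i1 [i2 ne e].
by rewrite (determinant_alternate ne) // => j; rewrite !mxE e.
Qed.

Lemma sum_ffun_image (s : 'I_m -> 'I_n) : injective s ->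
  \sum_(f : {ffun 'I_m -> 'I_n} | [set f i | i in 'I_m] == [set s r | r in 'I_m])
    (\prod_i M i (f i)) * \det (rowsub f N)
  = \det (colsub s M) * \det (rowsub s N).
Proof.
move=> s_inj; pose h (t : 'S_m) : {ffun 'I_m -> 'I_n} := [ffun i => s (t i)].
have h_inj : injective h.
  by move=> t1 t2 /ffunP e; apply/permP=> i; apply: s_inj; have := e i; rewrite !ffunE.
have imh (f : {ffun 'I_m -> 'I_n}) :
    ([set f i | i in 'I_m] == [set s r | r in 'I_m]) = (f \in h @: setT).
  apply/eqP/imsetP=> [imf|[t _ ->]]; last first.
    apply/setP=> x; apply/imsetP/imsetP=> [[i _ ->]|[r _ ->]].
      by exists (t i); rewrite ?ffunE.
    by exists ((t^-1)%g r); rewrite ?ffunE ?permKV.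
  have fs i : exists r, f i = s r.
    have : f i \in [set s r | r in 'I_m] by rewrite -imf imset_f.
    by case/imsetP=> r _ ->; exists r.
  have [g fg] := fin_all_exists fs.
  have /imset_injP f_inj : #|[set f i | i in 'I_m]| == #|'I_m|.
    by rewrite imf card_imset.
  have g_inj : injective g by move=> i1 i2 e; apply: f_inj; rewrite ?fg ?e.
  by exists (perm g_inj); rewrite ?inE //; apply/ffunP=> i; rewrite ffunE permE fg.
rewrite (eq_bigl _ _ imh) big_imset /=; last by move=> t1 t2 _ _; apply: h_inj.
rewrite (eq_bigl _ _ (@in_setT _)) [\det (colsub s M)]/determinant mulr_suml.
apply: eq_bigr => t _.
have -> : rowsub (h t) N = row_perm t (rowsub s N).
  by apply/matrixP=> i j; rewrite !mxE ffunE.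
rewrite row_permE det_mulmx det_perm mulrCA mulrA; congr (_ * _ * _).
by apply: eq_bigr => i _; rewrite ffunE mxE.
Qed.

Lemma cauchy_binet : \det (M *m N) = \sum_(U in msubsets n m)
  \det (M *m selmx F m U) * \det ((selmx F m U)^T *m N).
Proof.
rewrite det_mulmx_ffun.
rewrite (partition_big (fun f : {ffun 'I_m -> 'I_n} => [set f i | i in 'I_m]) predT) //=.
rewrite (bigID (mem (msubsets n m))) /= [X in _ + X]big1 ?addr0 => [|U]; last first.
  rewrite inE => cardU; apply: big1 => f /eqP imf; rewrite det_rowsub_noninj ?mulr0 //.
  by apply: contra cardU => /injectiveP f_inj; rewrite -imf card_imset // card_ord.
apply: eq_bigr => U; rewrite inE => /eqP/(selmx_colsub F)[s [s_inj -> ->]].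
by rewrite mulmx_colsub mulmx1 trmx_mxsub trmx1 mul_rowsub_mx mul1mx sum_ffun_image.
Qed.

End CauchyBinet.

Section Compound.

Variables (F : fieldType) (n m : nat).
Local Notation p := (extdim n m).
Implicit Types A B : 'M[F]_n.

Lemma card_subs (i : 'I_p) : #|subs i| = m.
Proof. by have := enum_valP i; rewrite inE => /eqP. Qed.

Lemma subs_neq (i j : 'I_p) : i != j -> exists2 c, c \in subs i & c \notin subs j.
Proof.
move=> ij; apply/subsetPn; apply: contra ij => sub_ij.
by apply/eqP/enum_val_inj/eqP; rewrite eqEcard sub_ij !card_subs /=.
Qed.

Lemma compound_row_eq0 A i j c : c \in subs i ->
  (forall u, u \in subs j -> A c u = 0) -> compound m A i j = 0.
Proof.
move=> ci A0; rewrite mxE.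
have [s [_ Ui ->]] := selmx_colsub F (card_subs i).
have [t [_ Uj ->]] := selmx_colsub F (card_subs j).
move: ci; rewrite colsub1_tr_mul Ui => /imsetP[r _ cr].
rewrite (expand_det_row _ r) big1 // => v _.
by rewrite mxE -cr A0 ?mul0r // Uj imset_f.
Qed.

Lemma compound_tr A : compound m A^T = (compound m A)^T.
Proof. by apply/matrixP=> i j; rewrite !mxE -[LHS]det_tr !trmx_mul !trmxK mulmxA. Qed.

Lemma compound_col_eq0 A i j u : u \in subs j ->
  (forall c, c \in subs i -> A c u = 0) -> compound m A i j = 0.
Proof.
move=> uj A0; have := compound_row_eq0 (A := A^T) (i := j) (j := i) uj.
by rewrite compound_tr mxE; apply=> c ci; rewrite mxE A0.
Qed.

Lemma compoundM A B : compound m (A *m B) = compound m A *m compound m B.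
Proof.
apply/matrixP=> i j; rewrite !mxE -!mulmxA mulmxA cauchy_binet.
rewrite (big_enum_val (fun U => _)) /=.
by apply: eq_bigr => l _; rewrite !mxE -!mulmxA.
Qed.

Lemma compound1 : compound m (1%:M : 'M[F]_n) = 1%:M.
Proof.
apply/matrixP=> i j; rewrite [RHS]mxE; case: eqVneq => [<-|ij].
  have [s [s_inj _ sel]] := selmx_colsub F (card_subs i).
  by rewrite mxE sel colsub1_tr_mul mxsub1_inj // det1.
have [c ci cj] := subs_neq ij; apply: compound_row_eq0 ci _ => u uj.
by rewrite mxE; case: eqVneq => // cu; rewrite cu uj in cj.
Qed.

Lemma compound_unit A : A \in unitmx -> compound m A \in unitmx.
Proof.
move=> A_unit; have := compoundM A (invmx A).
by rewrite mulmxV // compound1 => /esym/mulmx1_unit[].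
Qed.

End Compound.

Section SupportedUnitMatrix.

Variables (F : fieldType) (q : nat).
Implicit Types X : 'M[F]_q.

Lemma mulmx_delta_col X a b : (forall c, c != a -> X c b = 0) ->
  X *m delta_mx b b = X a b *: delta_mx a b.
Proof.
move=> X0; apply/matrixP=> c d; rewrite !mxE (bigD1 b) //= big1 => [|e eb]; last first.
  by rewrite mxE (negbTE eb) mulr0.
rewrite mxE eqxx addr0; case: (eqVneq c a) => [->|ca] //.
by rewrite X0 // mul0r mulr0.
Qed.

Lemma delta_mulmx_row X a b : (forall c, c != b -> X a c = 0) ->
  delta_mx a a *m X = X a b *: delta_mx a b.
Proof.
move=> X0; apply/trmx_inj; rewrite trmx_mul [RHS]linearZ /= !trmx_delta.
by rewrite (@mulmx_delta_col _ b) ?mxE // => c cb; rewrite mxE X0.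
Qed.

Lemma unitmx_col_supp X a b : X \in unitmx ->
  (forall c, c != a -> X c b = 0) -> X a b != 0.
Proof.
move=> X_unit X0; apply: contraTneq X_unit => Xab; rewrite unitmxE.
rewrite (expand_det_col _ b) big1 ?unitr0 // => c _.
by case: (eqVneq c a) => [->|ca]; rewrite ?Xab ?X0 ?mul0r.
Qed.

Lemma unitmx_row_supp X a b : X \in unitmx ->
  (forall c, c != b -> X a c = 0) -> X a b != 0.
Proof.
rewrite -unitmx_tr => X_unit X0.
have := unitmx_col_supp X_unit (a := b) (b := a).
by rewrite mxE; apply=> c cb; rewrite mxE X0.
Qed.

End SupportedUnitMatrix.

Section RankOneLambda.

Variables (F : fieldType) (n m : nat).
Local Notation p := (extdim n m).
Implicit Types B : 'M[F]_n.

Definition lambda_delta B B' (i : 'I_p) : 'M[F]_p :=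
  invmx (compound m B) *m delta_mx i i *m compound m B'.

Lemma rank_lambda_delta B B' i : B \in unitmx -> B' \in unitmx ->
  \rank (lambda_delta B B' i) = 1%N.
Proof.
move=> B_unit B'_unit; rewrite mxrankMfree ?row_free_unit ?compound_unit //.
by rewrite eqmxMfull ?mxrank_delta // row_full_unit unitmx_inv compound_unit.
Qed.

Lemma lambda_delta_proportional B1 B1' B2 B2' i1 i2 :
  B1 \in unitmx -> B2 \in unitmx -> B1' \in unitmx -> B2' \in unitmx ->
  (forall r c, r \notin subs i1 -> c \in subs i2 -> (B1 *m invmx B2) r c = 0) ->
  (forall r c, r \in subs i1 -> c \notin subs i2 -> (B1' *m invmx B2') r c = 0) ->
  proportional (lambda_delta B1 B1' i1) (lambda_delta B2 B2' i2).
Proof.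
move=> B1u B2u B1'u B2'u A0 A'0.
set A := B1 *m invmx B2; set A' := B1' *m invmx B2'.
have CB1 : compound m B1 = compound m A *m compound m B2.
  by rewrite -compoundM mulmxKV.
have CB1' : compound m B1' = compound m A' *m compound m B2'.
  by rewrite -compoundM mulmxKV.
have CA0 c : c != i1 -> compound m A c i2 = 0.
  by case/subs_neq=> r rc ri1; apply: compound_row_eq0 rc _ => u; apply: A0.
have CA'0 c : c != i2 -> compound m A' i1 c = 0.
  by case/subs_neq=> u uc ui2; apply: compound_col_eq0 uc _ => r ri1; apply: A'0.
have CAu : compound m A \in unitmx by rewrite compound_unit // unitmx_mul B1u unitmx_inv.
have CA'u : compound m A' \in unitmx by rewrite compound_unit // unitmx_mul B1'u unitmx_inv.
have a_neq0 := unitmx_col_supp CAu CA0.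
have a'_neq0 := unitmx_row_supp CA'u CA'0.
have invCB2 : invmx (compound m B2) = invmx (compound m B1) *m compound m A.
  rewrite -[in RHS](mulmxK (compound_unit m B2u) (compound m A)) -CB1 mulmxA.
  by rewrite mulVmx ?mul1mx ?compound_unit.
exists (compound m A' i1 i2 / compound m A i1 i2).
split; first by rewrite mulf_neq0 ?invr_eq0.
(* Both sides are multiples of invmx (compound m B1) *m delta_mx i1 i2 *m compound m B2'. *)
rewrite /lambda_delta invCB2 CB1' mulmxA -(mulmxA _ (delta_mx _ _)).
rewrite (delta_mulmx_row (b := i2)) //.
rewrite -(mulmxA _ (compound m A)) (mulmx_delta_col (a := i1)) //.
by rewrite -!scalemxAr -!scalemxAl scalerA mulfVK.
Qed.

End RankOneLambda.

Section LambdaMatrix.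

Variables (F : fieldType) (n m : nat).
Local Notation p := (extdim n m).
Implicit Types (B : 'M[F]_n) (lab : 'I_n -> lbl).

Lemma lambda_mx_eq0 B B' lab :
  (forall i : 'I_p, ~~ admissible lab (subs i)) -> lambda_mx m B B' lab = 0.
Proof.
move=> no_adm; rewrite /lambda_mx.
have -> : \row_i (admissible lab (subs i))%:R = 0 :> 'rV[F]_p.
  by apply/rowP=> i; rewrite !mxE (negbTE (no_adm i)).
by rewrite linear0 mulmx0 mul0mx.
Qed.

Lemma lambda_mx_neq0 B B' lab (i : 'I_p) :
  B \in unitmx -> B' \in unitmx -> admissible lab (subs i) ->
  lambda_mx m B B' lab != 0.
Proof.
move=> B_unit B'_unit adm_i; apply/eqP => /(congr1 (fun X =>
  compound m B *m X *m invmx (compound m B'))).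
rewrite /lambda_mx !mulmxA mulmxV ?compound_unit // mul1mx mulmxK ?compound_unit //.
rewrite mulmx0 mul0mx => /matrixP/(_ i i).
by rewrite !mxE eqxx adm_i mulr1n; apply/eqP/oner_neq0.
Qed.

Lemma lambda_mx_delta B B' lab (i0 : 'I_p) :
  (forall i, admissible lab (subs i) = (i == i0)) ->
  lambda_mx m B B' lab = lambda_delta B B' i0.
Proof.
move=> adm; rewrite /lambda_mx /lambda_delta; congr (_ *m _ *m _).
apply/matrixP=> i j; rewrite !mxE adm.
by case: (eqVneq i i0) => [->|_] /=; rewrite ?mul0rn // eq_sym.
Qed.

End LambdaMatrix.

Section IndicatorMatrix.

Variables (F : fieldType) (n : nat).
Implicit Types X Y : {set 'I_n}.

Definition indic_mx X : 'M[F]_n := diag_mx (\row_r (r \in X)%:R).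

Lemma row_indic_mul q X (B : 'M[F]_(n, q)) r :
  row r (indic_mx X *m B) = if r \in X then row r B else 0.
Proof.
by apply/rowP=> j; rewrite mul_diag_mx !mxE; case: (r \in X); rewrite ?mul1r ?mul0r ?mxE.
Qed.

Lemma row_sub_indic q X (B : 'M[F]_(n, q)) r : r \in X -> (row r B <= indic_mx X *m B)%MS.
Proof. by move=> rX; have := row_sub r (indic_mx X *m B); rewrite row_indic_mul rX. Qed.

Lemma indic_mxM X Y : indic_mx X *m indic_mx Y = indic_mx (X :&: Y).
Proof.
by rewrite mulmx_diag; congr diag_mx; apply/rowP=> r; rewrite !mxE inE -natrM mulnb.
Qed.

Lemma indic_mx0 : indic_mx set0 = 0.
Proof.
rewrite /indic_mx -[RHS](linear0 diag_mx); congr diag_mx.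
by apply/rowP=> r; rewrite !mxE inE.
Qed.

Lemma indic_mxC X : indic_mx (~: X) = 1%:M - indic_mx X.
Proof.
apply/matrixP=> i j; rewrite !mxE inE.
by case: (i == j); case: (i \in X); rewrite /= ?subrr ?subr0.
Qed.

Lemma rank_indic_mul X (B : 'M[F]_n) : B \in unitmx -> \rank (indic_mx X *m B) = #|X|.
Proof.
move=> B_unit; have [s [s_inj X_im _]] := selmx_colsub F (erefl #|X|).
have -> : (indic_mx X *m B :=: rowsub s B)%MS.
  apply/eqmxP/andP; split; apply/row_subP=> r.
    rewrite row_indic_mul; case: ifP => [rX|_]; last exact: sub0mx.
    move/setP/(_ r): X_im; rewrite rX => /esym/imsetP[k _ ->].
    by rewrite -row_rowsub row_sub.
  by rewrite row_rowsub row_sub_indic // X_im imset_f.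
by rewrite rowsubE mxrankMfree ?row_free_unit //; apply/eqP; apply: row_free_rowsub1.
Qed.

Lemma sub_indic_kernelP X Y (C C' : 'M[F]_n) (v : 'rV[F]_n) :
  C' \in unitmx -> Y \subset ~: X ->
  reflect (exists c, v = c *m (indic_mx (~: X) *m C) /\
                     0 = c *m (indic_mx (~: Y) *m C'))
          (v <= indic_mx Y *m C)%MS.
Proof.
move=> C'_unit YX; have YXE : Y :&: ~: X = Y by apply/setIidPl.
apply: (iffP submxP) => [[w ->]|[c [-> /esym]]].
  exists (w *m indic_mx Y); rewrite !mulmxA -!(mulmxA w) !indic_mxM YXE setICr.
  by split; rewrite // indic_mx0 mul0mx mulmx0.
rewrite mulmxA => /(congr1 (mulmx^~ (invmx C'))); rewrite mulmxK // mul0mx.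
rewrite indic_mxC mulmxBr mulmx1 => /eqP; rewrite subr_eq0 => /eqP cY.
by exists c; rewrite {1}cY -mulmxA (mulmxA (indic_mx Y)) indic_mxM YXE.
Qed.

Lemma mul_invmx_eq0 (B B2 : 'M[F]_n) X r c : B2 \in unitmx ->
  (row r B <= indic_mx X *m B2)%MS -> c \notin X -> (B *m invmx B2) r c = 0.
Proof.
move=> B2_unit /submxP[w rB] cX.
have -> : (B *m invmx B2) r c = row r (B *m invmx B2) 0 c by rewrite [RHS]mxE.
by rewrite row_mul rB !mulmxA mulmxK // mul_mx_diag !mxE (negbTE cX) mulr0.
Qed.

End IndicatorMatrix.

Section LinearRelation.

Variables (F : fieldType) (n : nat).
Implicit Types (P : 'M[F]_(n + n)) (v w : 'rV[F]_n).

Lemma sub_relP p (P : 'M[F]_(p, n + n)) v w :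
  reflect (exists u, v = u *m lsubmx P /\ w = u *m rsubmx P) (row_mx v w <= P)%MS.
Proof.
have uP u : u *m P = row_mx (u *m lsubmx P) (u *m rsubmx P).
  by rewrite -mul_mx_row hsubmxK.
apply: (iffP submxP) => [[u]|[u [-> ->]]]; last by exists u; rewrite uP.
by rewrite uP => /eq_row_mx[-> ->]; exists u.
Qed.

Lemma sub_KerMx P v : (v <= KerMx P)%MS = (row_mx v 0 <= P)%MS.
Proof.
rewrite /KerMx; apply/submxP/sub_relP => [[u ->]|[u [-> /esym/sub_kermxP/submxP[t ->]]]].
  exists (u *m kermx (rsubmx P)); split; first by rewrite mulmxA.
  by rewrite -mulmxA mulmx_ker mulmx0.
by exists t; rewrite mulmxA.
Qed.

Lemma sub_IndefMx P w : (w <= IndefMx P)%MS = (row_mx 0 w <= P)%MS.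
Proof.
rewrite /IndefMx; apply/submxP/sub_relP => [[u ->]|[u [/esym/sub_kermxP/submxP[t ->] ->]]].
  exists (u *m kermx (lsubmx P)); split; last by rewrite mulmxA.
  by rewrite -mulmxA mulmx_ker mulmx0.
by exists t; rewrite mulmxA.
Qed.

Lemma sub_DomMx P v : (v <= DomMx P)%MS <-> exists w, (row_mx v w <= P)%MS.
Proof.
split=> [/submxP[u ->]|[w /sub_relP[u [-> _]]]]; last exact: submxMl.
by exists (u *m rsubmx P); apply/sub_relP; exists u.
Qed.

Lemma sub_ImMx P w : (w <= ImMx P)%MS <-> exists v, (row_mx v w <= P)%MS.
Proof.
split=> [/submxP[u ->]|[v /sub_relP[u [_ ->]]]]; last exact: submxMl.
by exists (u *m lsubmx P); apply/sub_relP; exists u.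
Qed.

Lemma sub_KerImRel P v w :
  (row_mx v w <= KerImRel P)%MS = (v <= KerMx P)%MS && (w <= ImMx P)%MS.
Proof.
apply/sub_addsmxP/andP=> [[[a b]]|[/submxP[a ->] /submxP[b ->]]]; last first.
  by exists (a, b); rewrite !mul_mx_row !mulmx0 add_row_mx add0r addr0.
by rewrite !mul_mx_row !mulmx0 add_row_mx add0r addr0 => /eq_row_mx[-> ->]; rewrite !submxMl.
Qed.

Lemma DomMx_KerImRel P : (DomMx (KerImRel P) :=: KerMx P)%MS.
Proof.
apply/eqmxP/rV_eqP=> v; apply/idP/idP=> [/sub_DomMx[w]|vK].
  by rewrite sub_KerImRel => /andP[].
by apply/sub_DomMx; exists 0; rewrite sub_KerImRel vK sub0mx.
Qed.

Lemma IndefMx_KerImRel P : (IndefMx (KerImRel P) :=: ImMx P)%MS.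
Proof. by apply/eqmxP/rV_eqP=> w; rewrite sub_IndefMx sub_KerImRel sub0mx. Qed.

End LinearRelation.

Section AdaptedBasis.

Variables (F : fieldType) (n : nat).
Implicit Types (lab : 'I_n -> lbl) (B : 'M[F]_n).

Definition Frows lab : {set 'I_n} := [set r | lbl_eqb (lab r) Lf].
Definition Hrows lab : {set 'I_n} := [set r | lbl_eqb (lab r) Lh].

Lemma Frows_subCHrows lab : Frows lab \subset ~: Hrows lab.
Proof. by apply/subsetP=> r; rewrite !inE; case: (lab r). Qed.

Lemma adapted_matrixE B B' lab :
  \matrix_(r < n) row_mx (if lbl_eqb (lab r) Lf then 0 else row r B)
                         (if lbl_eqb (lab r) Lh then 0 else row r B')
  = row_mx (indic_mx F (~: Frows lab) *m B) (indic_mx F (~: Hrows lab) *m B').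
Proof.
apply/row_matrixP=> r; rewrite rowK row_row_mx !row_indic_mul !inE.
by case: (lab r).
Qed.

Variables (P : 'M[F]_(n + n)) (B B' : 'M[F]_n) (lab : 'I_n -> lbl).
Hypothesis adP : adapted P B B' lab.

Lemma sub_adaptedP (v w : 'rV[F]_n) :
  reflect (exists c, v = c *m (indic_mx F (~: Frows lab) *m B) /\
                     w = c *m (indic_mx F (~: Hrows lab) *m B'))
          (row_mx v w <= P)%MS.
Proof.
case: adP => _ _ /eqmxP->; rewrite adapted_matrixE.
by apply: (iffP (sub_relP _ _ _)); rewrite row_mxKl row_mxKr.
Qed.

Lemma KerMx_adapted : (KerMx P :=: indic_mx F (Hrows lab) *m B)%MS.
Proof.
have HF : Hrows lab \subset ~: Frows lab by rewrite subsetC Frows_subCHrows.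
case: (adP) => _ B'_unit _; apply/eqmxP/rV_eqP=> v.
by rewrite sub_KerMx; apply/sub_adaptedP/(sub_indic_kernelP _ _ B'_unit HF).
Qed.

Lemma IndefMx_adapted : (IndefMx P :=: indic_mx F (Frows lab) *m B')%MS.
Proof.
case: (adP) => B_unit _ _; apply/eqmxP/rV_eqP=> w; rewrite sub_IndefMx.
apply/sub_adaptedP/(sub_indic_kernelP _ _ B_unit (Frows_subCHrows lab)).
  by move=> [c [e0 ->]]; exists c.
by move=> [c [-> e0]]; exists c.
Qed.

Lemma DomMx_adapted : (DomMx P :=: indic_mx F (~: Frows lab) *m B)%MS.
Proof.
apply/eqmxP/rV_eqP=> v; apply/idP/idP=> [/sub_DomMx[w /sub_adaptedP[c [-> _]]]|].
  exact: submxMl.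
case/submxP=> c ->; apply/sub_DomMx; exists (c *m (indic_mx F (~: Hrows lab) *m B')).
by apply/sub_adaptedP; exists c.
Qed.

Lemma ImMx_adapted : (ImMx P :=: indic_mx F (~: Hrows lab) *m B')%MS.
Proof.
apply/eqmxP/rV_eqP=> w; apply/idP/idP=> [/sub_ImMx[v /sub_adaptedP[c [_ ->]]]|].
  exact: submxMl.
case/submxP=> c ->; apply/sub_ImMx; exists (c *m (indic_mx F (~: Frows lab) *m B)).
by apply/sub_adaptedP; exists c.
Qed.

Lemma rank_IndefMx_adapted : \rank (IndefMx P) = #|Frows lab|.
Proof. by case: adP => _ B'_unit _; rewrite IndefMx_adapted rank_indic_mul. Qed.

Lemma rank_DomMx_adapted : \rank (DomMx P) = #|~: Frows lab|.
Proof. by case: adP => B_unit _ _; rewrite DomMx_adapted rank_indic_mul. Qed.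

Lemma rank_KerMx_adapted : \rank (KerMx P) = #|Hrows lab|.
Proof. by case: adP => B_unit _ _; rewrite KerMx_adapted rank_indic_mul. Qed.

Lemma rank_ImMx_adapted : \rank (ImMx P) = #|~: Hrows lab|.
Proof. by case: adP => _ B'_unit _; rewrite ImMx_adapted rank_indic_mul. Qed.

Lemma rank_DomMx_IndefMx : (\rank (DomMx P) + \rank (IndefMx P))%N = n.
Proof. by rewrite rank_DomMx_adapted rank_IndefMx_adapted addnC cardsC card_ord. Qed.

Lemma rank_KerMx_ImMx : (\rank (KerMx P) + \rank (ImMx P))%N = n.
Proof. by rewrite rank_KerMx_adapted rank_ImMx_adapted cardsC card_ord. Qed.

Lemma rank_IndefMx_rkrel : (\rank (IndefMx P) + rkrel P)%N = \rank (ImMx P).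
Proof.
rewrite /rkrel rank_DomMx_adapted rank_KerMx_adapted rank_ImMx_adapted.
rewrite rank_IndefMx_adapted.
have HF : (#|Hrows lab| <= #|~: Frows lab|)%N.
  by rewrite subset_leq_card // subsetC Frows_subCHrows.
have := cardsC (Frows lab); have := cardsC (Hrows lab); lia.
Qed.

End AdaptedBasis.

Lemma card_between (T : finType) (A B : {set T}) d : A \subset B ->
  (#|A| <= d <= #|B|)%N -> exists C : {set T}, [/\ A \subset C, C \subset B & #|C| = d].
Proof.
move=> AB /andP[Ad]; rewrite -(subnKC Ad).
elim: (d - #|A|)%N => [|e IH] dB; first by exists A; rewrite subxx AB addn0.
have /IH[C [AC CB cardC]] : (#|A| + e <= #|B|)%N by lia.
have [x] : exists x, x \in B :\: C.
  by apply/set0Pn; rewrite -card_gt0 cardsD (setIidPr CB) subn_gt0 cardC -addnS.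
rewrite inE => /andP[xC xB]; exists (x |: C).
by rewrite subsetU ?AC ?orbT // subUset sub1set xB CB cardsU1 xC cardC addnS.
Qed.

Section Admissible.

Variables (n m : nat).
Local Notation p := (extdim n m).
Implicit Types (lab : 'I_n -> lbl) (S : {set 'I_n}).

Lemma subs_onto S : #|S| = m -> exists i : 'I_p, subs i = S.
Proof.
move=> cardS; have Sm : S \in msubsets n m by rewrite inE cardS.
by exists (enum_rank_in Sm S); rewrite /subs enum_rankK_in.
Qed.

Lemma admissibleE lab S :
  admissible lab S = (Frows lab \subset S) && (S \subset ~: Hrows lab).
Proof.
congr andb; apply/forallP/subsetP=> adm r.
- by rewrite inE => /(implyP (adm r)).
- by apply/implyP=> Fr; apply: adm; rewrite inE.
- by move=> rS; rewrite !inE; apply: contraL rS; apply: (implyP (adm r)).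
- by apply/implyP=> Hr; apply/negP=> /adm; rewrite !inE Hr.
Qed.

Lemma exists_admissible lab : (exists i : 'I_p, admissible lab (subs i)) <->
  (#|Frows lab| <= m <= #|~: Hrows lab|)%N.
Proof.
split.
  case=> i; rewrite admissibleE => /andP[FS SH].
  by move: (subset_leq_card FS) (subset_leq_card SH); rewrite card_subs => -> ->.
case/(card_between (Frows_subCHrows lab))=> S [FS SH /subs_onto[i Si]].
by exists i; rewrite admissibleE Si FS SH.
Qed.

Lemma admissible_Frows lab : #|Frows lab| = m -> forall S, #|S| = m ->
  admissible lab S = (S == Frows lab).
Proof.
move=> cardF S cardS; rewrite admissibleE.
have eqSF : (S == Frows lab) = (Frows lab \subset S).
  by rewrite eq_sym eqEcard cardF cardS leqnn andbT.
rewrite -eqSF; apply: andb_idr => /eqP->.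
exact: Frows_subCHrows.
Qed.

Lemma admissible_CHrows lab : #|~: Hrows lab| = m -> forall S, #|S| = m ->
  admissible lab S = (S == ~: Hrows lab).
Proof.
move=> cardH S cardS; rewrite admissibleE.
have eqSH : (S == ~: Hrows lab) = (S \subset ~: Hrows lab).
  by rewrite eqEcard cardH cardS leqnn andbT.
rewrite -eqSH; apply: andb_idl => /eqP->.
exact: Frows_subCHrows.
Qed.

End Admissible.

Section AdaptedLambda.

Variables (F : fieldType) (n m : nat).
Implicit Types (P : 'M[F]_(n + n)) (B : 'M[F]_n) (lab : 'I_n -> lbl).

Lemma lambda_mx_single B B' lab (S : {set 'I_n}) : #|S| = m ->
  (forall T : {set 'I_n}, #|T| = m -> admissible lab T = (T == S)) ->
  exists i, subs i = S /\ lambda_mx m B B' lab = lambda_delta B B' i.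
Proof.
move=> /subs_onto[i Si] admS; exists i; split=> //; apply: lambda_mx_delta => j.
by rewrite admS ?card_subs // -Si (inj_eq enum_val_inj).
Qed.

Lemma lambda_mx_neq0_iff P B B' lab : adapted P B B' lab ->
  (lambda_mx m B B' lab != 0) = (\rank (IndefMx P) <= m <= \rank (ImMx P))%N.
Proof.
move=> adP; have [B_unit B'_unit _] := adP.
rewrite (rank_IndefMx_adapted adP) (rank_ImMx_adapted adP).
apply/idP/idP=> [|/exists_admissible[i adm]]; last exact: lambda_mx_neq0 adm.
apply: contraR => range; apply/eqP; apply: lambda_mx_eq0 => i.
by apply: contra range => adm; apply/exists_admissible; exists i.
Qed.

Lemma lambda_mx_transition P1 B1 B1' lab1 P2 B2 B2' lab2 :
  adapted P1 B1 B1' lab1 -> adapted P2 B2 B2' lab2 ->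
  (KerMx P1 <= DomMx P2)%MS -> (ImMx P1 <= IndefMx P2)%MS ->
  \rank (ImMx P1) = m -> \rank (IndefMx P2) = m ->
  [/\ \rank (lambda_mx m B1 B1' lab1) = 1%N, \rank (lambda_mx m B2 B2' lab2) = 1%N
    & proportional (lambda_mx m B1 B1' lab1) (lambda_mx m B2 B2' lab2)].
Proof.
move=> ad1 ad2 KD ID.
rewrite (rank_ImMx_adapted ad1) (rank_IndefMx_adapted ad2) => cardH1 cardF2.
have [i1 [Si1 ->]] := lambda_mx_single B1 B1' cardH1 (admissible_CHrows cardH1).
have [i2 [Si2 ->]] := lambda_mx_single B2 B2' cardF2 (admissible_Frows cardF2).
have [B1_unit B1'_unit _] := ad1; have [B2_unit B2'_unit _] := ad2.
rewrite !rank_lambda_delta //; split=> //; apply: lambda_delta_proportional => // r c.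
  rewrite Si1 Si2 inE negbK => rH1 cF2.
  apply: (mul_invmx_eq0 (X := ~: Frows lab2)) => //; last by rewrite in_setC cF2.
  rewrite -(DomMx_adapted ad2); apply: submx_trans KD.
  by rewrite (KerMx_adapted ad1) row_sub_indic.
rewrite Si1 Si2 => rH1 cF2; apply: (mul_invmx_eq0 (X := Frows lab2)) => //.
rewrite -(IndefMx_adapted ad2); apply: submx_trans ID.
by rewrite (ImMx_adapted ad1) row_sub_indic.
Qed.

End AdaptedLambda.

Section Hinge.

Variables (F : fieldType) (n k m : nat) (P : nat -> 'M[F]_(n + n)).
Variables (L LQ : nat -> 'M[F]_(extdim n m)).
Hypothesis hP : hinge k P.
Hypothesis hL : forall j, (1 <= j <= k)%N -> is_lambda m (P j) (L j).
Hypothesis hLQ : forall j, (1 <= j <= k)%N -> is_lambda m (KerImRel (P j)) (LQ j).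

Local Notation a j := (\rank (IndefMx (P j))).
Local Notation b j := (rkrel (P j)).

Lemma hinge_adapted j : (1 <= j <= k)%N -> exists B B' lab, adapted (P j) B B' lab.
Proof. by case/hL=> B [B' [lab [adP _]]]; exists B, B', lab. Qed.

Lemma hinge_a1 : a 1%N = 0%N.
Proof.
have [k_gt0 _ _ /eqP Dom1 _] := hP.
have [|B [B' [lab adP]]] := @hinge_adapted 1; first by rewrite leqnn k_gt0.
by have := rank_DomMx_IndefMx adP; rewrite Dom1; lia.
Qed.

Lemma hinge_aS j : (1 <= j < k)%N -> a j.+1 = (a j + b j)%N.
Proof.
case/andP=> j_ge1 jk; have [_ _ /(_ j j_ge1 jk)[/eqmx_rank KD _] _ _] := hP.
have [|B1 [B1' [lab1 ad1]]] := @hinge_adapted j; first by lia.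
have [|B2 [B2' [lab2 ad2]]] := @hinge_adapted j.+1; first by lia.
have := rank_KerMx_ImMx ad1; have := rank_DomMx_IndefMx ad2.
by rewrite (rank_IndefMx_rkrel ad1) KD; lia.
Qed.

Lemma hinge_ak : (a k + b k)%N = n.
Proof.
have [k_gt0 _ _ _ /eqP Imk] := hP.
have [|B [B' [lab adP]]] := @hinge_adapted k; first by rewrite leqnn k_gt0.
by rewrite (rank_IndefMx_rkrel adP).
Qed.

Lemma hinge_lambda_neq0 j : (1 <= j <= k)%N -> (L j != 0) = (a j <= m <= a j + b j)%N.
Proof.
case/hL=> B [B' [lab [adP ->]]].
by rewrite (lambda_mx_neq0_iff _ adP) (rank_IndefMx_rkrel adP).
Qed.

Lemma hinge_lambda_pair j : (1 <= j < k)%N -> m = a j.+1 ->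
  [/\ \rank (L j) = 1%N, \rank (L j.+1) = 1%N,
      proportional (L j) (L j.+1) & proportional (L j) (LQ j)].
Proof.
move=> j_range m_a; have /andP[j_ge1 jk] := j_range.
have [_ _ /(_ j j_ge1 jk)[/andP[KD _] /andP[ID _]] _ _] := hP.
have j_in : (1 <= j <= k)%N by lia.
have [B1 [B1' [lab1 [ad1 ->]]]] := hL j_in.
have [|B2 [B2' [lab2 [ad2 ->]]]] := hL (j := j.+1); first by lia.
have [Bq [Bq' [labq [adq ->]]]] := hLQ j_in.
have Im_m : \rank (ImMx (P j)) = m by rewrite -(rank_IndefMx_rkrel ad1) -hinge_aS.
have [r1 r2 prop12] := lambda_mx_transition ad1 ad2 KD ID Im_m (esym m_a).
have KQ : (KerMx (P j) <= DomMx (KerImRel (P j)))%MS by rewrite DomMx_KerImRel.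
have IQ : (ImMx (P j) <= IndefMx (KerImRel (P j)))%MS by rewrite IndefMx_KerImRel.
have IQm : \rank (IndefMx (KerImRel (P j))) = m by rewrite IndefMx_KerImRel.
by have [_ _ prop1Q] := lambda_mx_transition ad1 adq KQ IQ Im_m IQm.
Qed.

End Hinge.

Theorem theorem2p4 (R : realType) (n k m : nat)
    (P : nat -> 'M[R[i]]_(n + n))
    (L : nat -> 'M[R[i]]_(extdim n m)) (LQ : nat -> 'M[R[i]]_(extdim n m)) :
  hinge k P ->
  (m <= n)%N ->
  (forall j, (1 <= j <= k)%N -> is_lambda m (P j) (L j)) ->
  (forall j, (1 <= j <= k)%N -> is_lambda m (KerImRel (P j)) (LQ j)) ->
  let C1 :=
    exists j, [/\ (1 <= j <= k)%N, L j != 0 &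
      forall t, (1 <= t <= k)%N -> L t != 0 -> t = j] in
  let C2 :=
    exists j, [/\ (1 <= j)%N /\ (j.+1 <= k)%N, L j != 0 /\ L j.+1 != 0,
      (forall t, (1 <= t <= k)%N -> t <> j -> t <> j.+1 -> L t = 0),
      \rank (L j) = 1%N /\ \rank (L j.+1) = 1%N &
      proportional (L j) (L j.+1) /\ proportional (L j) (LQ j)] in
  (C1 /\ ~ C2) \/ (~ C1 /\ C2).
Proof.
move=> hP le_mn hL hLQ C1 C2.
have [k_gt0 hrk _ _ _] := hP.
have nzE := hinge_lambda_neq0 hL.
have [|j j_in hitE] := chain_hit k_gt0 (hinge_a1 hP hL) (hinge_aS hP hL)
  (fun j j_in => (hrk j j_in).2) (m := m).
  by rewrite (hinge_ak hP hL).
have not_both : ~ (C1 /\ C2).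
  case=> [[t [t_in _ uniq_t]] [s [[s_ge1 sk] [Ls Ls1] _ _ _]]].
  by have := uniq_t s; have := uniq_t s.+1; lia.
have Lj : L j != 0 by rewrite nzE // hitE // eqxx.
case: (boolP ((1 < j)%N && (m == \rank (IndefMx (P j))))) => [|no_pred].
  move=> /andP[j_gt1 /eqP m_a].
  suff c2 : C2 by right; split=> // c1; apply: not_both.
  have [i ji] : exists i, j = i.+1 by exists j.-1; rewrite prednK // ltnW.
  subst j; have i_range : (1 <= i < k)%N by lia.
  have [r1 r2 p1 p2] := hinge_lambda_pair hP hL hLQ i_range m_a.
  exists i; split=> // [|t t_in ti ti1]; first by rewrite nzE ?hitE ?eqxx ?m_a //; lia.
  by apply/eqP; rewrite -[_ == 0]negbK nzE // hitE //; apply/norP; split; apply/eqP; lia.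
suff c1 : C1 by left; split=> // c2; apply: not_both.
exists j; split=> // t t_in; rewrite nzE // hitE // => /orP[/eqP //|/andP[/eqP tj ma]].
by move: no_pred; rewrite ma -tj andbT; lia.
Qed.
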